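(* Let $\mathfrak g=\mathfrak g(\mathfrak l,V,\mathfrak z,\beta)$ be an admissible Lie algebra and let $x\in\mathfrak g$ be such that $\operatorname{co}(x)$ is pointed. Then $\mathcal O_x\cap(\mathfrak z+\mathfrak l)\neq\emptyset$, i.e. $x$ is conjugate under $\operatorname{Inn}(\mathfrak g)$ to an element of $\mathfrak z+\mathfrak l$.
   Context: All Lie algebras are finite-dimensional and real. $\operatorname{Inn}(\mathfrak g)$ is the group generated by $e^{\operatorname{ad}y}$, $y\in\mathfrak g$; $\mathcal O_x=\operatorname{Inn}(\mathfrak g)x$; $\operatorname{co}(x)$ is the closed convex hull of $\mathcal O_x$. A closed convex subset of a finite-dimensional real vector space is pointed if it contains no affine line, and generating if it spans the space. $\mathfrak g$ is admissible if it contains an $\operatorname{Inn}(\mathfrak g)$-invariant pointed generating closed convex subset. For a reductive Lie algebra $\mathfrak l$, an $\mathfrak l$-module $V$, a real vector space $\mathfrak z$ and an $\mathfrak l$-invariant skew-symmetric bilinear map $\beta:V\times V\to\mathfrak z$, $\mathfrak g(\mathfrak l,V,\mathfrak z,\beta)$ is $\mathfrak z\oplus V\oplus\mathfrak l$ with bracket $[(z,v,x),(z',v',x')]=(\beta(v,v'),x.v'-x'.v,[x,x'])$. Standing facts: every admissible Lie algebra is of this form with $\mathfrak z=\mathfrak z(\mathfrak g)$ the center, $\mathfrak z\oplus V$ the maximal nilpotent ideal, $\mathfrak l$ reductive with every simple ideal compact or hermitian, $\mathfrak l$ containing a compactly embedded Cartan subalgebra $\mathfrak t_{\mathfrak l}$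 such that $\mathfrak t=\mathfrak z+\mathfrak t_{\mathfrak l}$ is a compactly embedded Cartan subalgebra of $\mathfrak g$, $V=[\mathfrak t_{\mathfrak l},V]$, and there is $f\in\mathfrak z^*$ such that $f\circ\beta$ is a symplectic form on $V$ and $v\mapsto f(\beta(y.v,v))$ is positive definite for some $y\in\mathfrak l$. *)

From HB Require Import structures.
From mathcomp Require Import all_boot all_order all_algebra.
From mathcomp Require Import all_classical all_reals all_analysis.
Set Implicit Arguments. Unset Strict Implicit. Unset Printing Implicit Defensive.
Import Order.TTheory GRing.Theory Num.Theory.
Import numFieldNormedType.Exports.
Local Open Scope classical_set_scope.
Local Open Scope ring_scope.

Section LieDefs.
Variable R : realType.

Definition bilinear_map (m n p : nat)
    (b : 'rV[R]_m -> 'rV[R]_n -> 'rV[R]_p) : Prop :=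
  (forall (a : R) u u' v, b (a *: u + u') v = a *: b u v + b u' v) /\
  (forall (a : R) u v v', b u (a *: v + v') = a *: b u v + b u v').

Definition is_lie_bracket (n : nat) (br : 'rV[R]_n -> 'rV[R]_n -> 'rV[R]_n) : Prop :=
  [/\ bilinear_map br,
      (forall x, br x x = 0) &
      (forall x y z, br x (br y z) + br y (br z x) + br z (br x y) = 0)].

(* matrix of ad x (row-vector convention: v *m ad_mx br x = br x v) *)
Definition ad_mx (n : nat) (br : 'rV[R]_n -> 'rV[R]_n -> 'rV[R]_n) (x : 'rV[R]_n)
  : 'M[R]_n := lin1_mx (br x).

Definition mexp (n : nat) (A : 'M[R]_n) : 'M[R]_n :=
  limn (fun N : nat => \sum_(k < N) ((k`!)%:R)^-1 *: A ^+ k).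

Definition gen_elt (n : nat) (br : 'rV[R]_n -> 'rV[R]_n -> 'rV[R]_n)
  (p : bool * 'rV[R]_n) : 'M[R]_n :=
  if p.1 then mexp (ad_mx br p.2) else invmx (mexp (ad_mx br p.2)).

Definition Inn (n : nat) (br : 'rV[R]_n -> 'rV[R]_n -> 'rV[R]_n) : set 'M[R]_n :=
  [set M | exists s : seq (bool * 'rV[R]_n),
      M = foldr (fun p acc => gen_elt br p *m acc) 1%:M s].

Definition inn_orbit (n : nat) (br : 'rV[R]_n -> 'rV[R]_n -> 'rV[R]_n) (x : 'rV[R]_n)
  : set 'rV[R]_n := [set x *m M | M in Inn br].

Definition conv_hull (n : nat) (S : set 'rV[R]_n) : set 'rV[R]_n :=
  [set v | exists (k : nat) (w : 'I_k -> R) (p : 'I_k -> 'rV[R]_n),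
      [/\ forall i, 0 <= w i, \sum_(i < k) w i = 1, forall i, S (p i) &
          v = \sum_(i < k) w i *: p i]].

Definition co (n : nat) (br : 'rV[R]_n -> 'rV[R]_n -> 'rV[R]_n) (x : 'rV[R]_n)
  : set 'rV[R]_n := closure (conv_hull (inn_orbit br x)).

Definition convex_subset (n : nat) (C : set 'rV[R]_n) : Prop :=
  forall u v (t : R), C u -> C v -> 0 <= t -> t <= 1 -> C (t *: u + (1 - t) *: v).

Definition pointed (n : nat) (C : set 'rV[R]_n) : Prop :=
  ~ exists a d : 'rV[R]_n, d != 0 /\ forall t : R, C (a + t *: d).

Definition generating (n : nat) (C : set 'rV[R]_n) : Prop :=
  forall v, exists (k : nat) (c : 'I_k -> R) (p : 'I_k -> 'rV[R]_n),
    (forall i, C (p i)) /\ v = \sum_(i < k) c i *: p i.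

Definition admissible (n : nat) (br : 'rV[R]_n -> 'rV[R]_n -> 'rV[R]_n) : Prop :=
  exists C : set 'rV[R]_n,
    [/\ closed C, convex_subset C, pointed C, generating C &
        forall M v, Inn br M -> C v -> C (v *m M)].

Definition ad_invariant (n : nat) (br : 'rV[R]_n -> 'rV[R]_n -> 'rV[R]_n)
  (W : 'M[R]_n) : Prop := forall x, (W *m ad_mx br x <= W)%MS.

Definition reductive (n : nat) (br : 'rV[R]_n -> 'rV[R]_n -> 'rV[R]_n) : Prop :=
  is_lie_bracket br /\
  forall W : 'M[R]_n, ad_invariant br W ->
    exists W' : 'M[R]_n, [/\ ad_invariant br W',
        (W :&: W' == (0 : 'M[R]_n))%MS & (W + W' == (1%:M : 'M[R]_n))%MS].

Definition gz (nz nV nl : nat) (u : 'rV[R]_(nz + nV + nl)) : 'rV[R]_nz :=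
  lsubmx (lsubmx u).
Definition gV (nz nV nl : nat) (u : 'rV[R]_(nz + nV + nl)) : 'rV[R]_nV :=
  rsubmx (lsubmx u).
Definition gl (nz nV nl : nat) (u : 'rV[R]_(nz + nV + nl)) : 'rV[R]_nl :=
  rsubmx u.
Definition gmk (nz nV nl : nat) (z : 'rV[R]_nz) (v : 'rV[R]_nV) (x : 'rV[R]_nl)
  : 'rV[R]_(nz + nV + nl) := row_mx (row_mx z v) x.

Definition gbracket (nz nV nl : nat)
  (brl : 'rV[R]_nl -> 'rV[R]_nl -> 'rV[R]_nl)
  (act : 'rV[R]_nl -> 'rV[R]_nV -> 'rV[R]_nV)
  (beta : 'rV[R]_nV -> 'rV[R]_nV -> 'rV[R]_nz)
  (u u' : 'rV[R]_(nz + nV + nl)) : 'rV[R]_(nz + nV + nl) :=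
  gmk (beta (gV u) (gV u'))
      (act (gl u) (gV u') - act (gl u') (gV u))
      (brl (gl u) (gl u')).

Definition is_module (nV nl : nat) (brl : 'rV[R]_nl -> 'rV[R]_nl -> 'rV[R]_nl)
  (act : 'rV[R]_nl -> 'rV[R]_nV -> 'rV[R]_nV) : Prop :=
  bilinear_map act /\
  forall x y v, act (brl x y) v = act x (act y v) - act y (act x v).

Definition invariant_skew (nz nV nl : nat)
  (act : 'rV[R]_nl -> 'rV[R]_nV -> 'rV[R]_nV)
  (beta : 'rV[R]_nV -> 'rV[R]_nV -> 'rV[R]_nz) : Prop :=
  [/\ bilinear_map beta,
      (forall v w, beta w v = - beta v w) &
      (forall x v w, beta (act x v) w + beta v (act x w) = 0)].

End LieDefs.

From HB Require Import structures.
From mathcomp Require Import all_boot all_order all_algebra.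
From mathcomp Require Import all_classical all_reals all_analysis.
Set Implicit Arguments. Unset Strict Implicit. Unset Printing Implicit Defensive.
Import Order.TTheory GRing.Theory Num.Theory.
Import numFieldNormedType.Exports.
Local Open Scope classical_set_scope.
Local Open Scope ring_scope.

(* Conjugating by e^{ad w} with w in V turns the V-component v of x = (z, v, X)
   into v - X.w, so x can be moved into z + l as soon as v lies in the image of
   the action of X on V.  That action is skew for the symplectic form f o beta,
   hence its image is the orthogonal of its kernel.  If instead v pairs
   nontrivially with some k such that X.k = 0, then
   e^{ad(t k)} x = x + t (beta(k,v), 0, 0) for every real t: co(x) contains an
   affine line, so it is not pointed. *)

Section CombLinear.
Variables (R : pzRingType) (U V : lmodType R) (p : U -> V).
Hypothesis p_comb : forall (a : R) u u', p (a *: u + u') = a *: p u + p u'.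

Lemma comb_linear0 : p 0 = 0.
Proof. by have := p_comb (-1) 0 0; rewrite scaler0 addr0 scaleN1r addNr. Qed.

Lemma comb_linearD u u' : p (u + u') = p u + p u'.
Proof. by have := p_comb 1 u u'; rewrite !scale1r. Qed.

Lemma comb_linearZ a u : p (a *: u) = a *: p u.
Proof. by have := p_comb a u 0; rewrite !addr0 comb_linear0 addr0. Qed.

Lemma comb_linearN u : p (- u) = - p u.
Proof. by rewrite -scaleN1r comb_linearZ scaleN1r. Qed.

End CombLinear.

Section RowLinear.
Variable F : fieldType.

Lemma comb_linear_row_sum n (h : 'rV[F]_n -> F)
    (h_comb : forall (a : F) u u', h (a *: u + u') = a * h u + h u') u :
  h u = \sum_(i < n) u 0 i * h (delta_mx 0 i).
Proof.
have hD := @comb_linearD _ _ F^o h h_comb.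
have h0 := @comb_linear0 _ _ F^o h h_comb.
rewrite {1}(row_sum_delta u) (big_morph h hD h0).
by apply: eq_bigr => i _; rewrite (@comb_linearZ _ _ F^o h h_comb).
Qed.

Lemma mul_rV_lin1_comb m n (h : 'rV[F]_m -> 'rV[F]_n)
    (h_comb : forall (a : F) u u', h (a *: u + u') = a *: h u + h u') u :
  u *m lin1_mx h = h u.
Proof.
apply/rowP => j; rewrite mxE (@comb_linear_row_sum _ (fun u => h u 0 j)).
  by apply: eq_bigr => i _; rewrite mxE.
by move=> a u1 u2; rewrite h_comb !mxE.
Qed.

Lemma skew_mx_sub n (G P : 'M[F]_n) (v : 'rV[F]_n) :
    G \in unitmx -> P *m G = - (G *m P^T) ->
  v *m G^T *m (kermx P)^T = 0 -> (v <= P)%MS.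
Proof.
(* The rows of P lie in the kernel of G^T (kermx P)^T, which has rank \rank P. *)
move=> Gu PGskew; rewrite -mulmxA => /sub_kermxP /submx_trans; apply.
have GtK_full : (G^T *m (kermx P)^T :=: (kermx P)^T)%MS.
  by apply: eqmxMfull; rewrite row_full_unit unitmx_tr.
have PGt : P *m G^T = - (G^T *m P^T).
  by apply: trmx_inj; rewrite linearN /= !trmx_mul !trmxK PGskew opprK.
have P_sub : (P <= kermx (G^T *m (kermx P)^T))%MS.
  apply/sub_kermxP; rewrite mulmxA PGt mulNmx -mulmxA -trmx_mul mulmx_ker.
  by rewrite trmx0 mulmx0 oppr0.
rewrite -(mxrank_leqif_sup P_sub).2 mxrank_ker GtK_full mxrank_tr mxrank_ker.
by rewrite subKn // rank_leq_row.
Qed.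

End RowLinear.

Section BilinearForm.
Variables (F : fieldType) (n : nat) (g : 'rV[F]_n -> 'rV[F]_n -> F).
Hypothesis g_combl : forall (a : F) u u' v, g (a *: u + u') v = a * g u v + g u' v.
Hypothesis g_combr : forall (a : F) u v v', g u (a *: v + v') = a * g u v + g u v'.

Definition form_mx : 'M[F]_n := \matrix_(i, j) g (delta_mx 0 i) (delta_mx 0 j).

Lemma form_mxE u v : g u v = (u *m form_mx *m v^T) 0 0.
Proof.
rewrite (@comb_linear_row_sum _ _ (g^~ v)); last by move=> *; apply: g_combl.
rewrite -mulmxA mxE; apply: eq_bigr => i _; congr (_ * _); rewrite mxE.
rewrite (@comb_linear_row_sum _ _ (g _)); last by move=> *; apply: g_combr.
by apply: eq_bigr => j _; rewrite !mxE mulrC.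
Qed.

Lemma form_mx_unit : (forall u, (forall v, g u v = 0) -> u = 0) -> form_mx \in unitmx.
Proof.
move=> g_nondeg; rewrite -row_free_unit -kermx_eq0; apply/eqP/row_matrixP => i.
rewrite row0; apply: g_nondeg => v.
by rewrite form_mxE -row_mul mulmx_ker row0 !mul0mx mxE.
Qed.

Lemma form_mx_skew (rho : 'rV[F]_n -> 'rV[F]_n) :
    (forall (a : F) u u', rho (a *: u + u') = a *: rho u + rho u') ->
    (forall u v, g (rho u) v + g u (rho v) = 0) ->
  lin1_mx rho *m form_mx = - (form_mx *m (lin1_mx rho)^T).
Proof.
move=> rho_comb rho_skew; apply/eqP; rewrite -addr_eq0; apply/eqP/matrixP => i j.
have deltaE (M : 'M[F]_n) :
    ((delta_mx 0 i : 'rV_n) *m M *m (delta_mx 0 j : 'rV_n)^T) 0 0 = M i j.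
  by rewrite trmx_delta -colE -rowE !mxE.
have := rho_skew (delta_mx 0 i) (delta_mx 0 j).
rewrite !form_mxE -!(mul_rV_lin1_comb rho_comb) trmx_mul !mulmxA.
by move=> skew_ij; rewrite [LHS]mxE -!deltaE !mulmxA skew_ij mulmx0 mul0mx mxE.
Qed.

Lemma skew_image_orth_ker (rho : 'rV[F]_n -> 'rV[F]_n) (v : 'rV[F]_n) :
    (forall u, (forall v, g u v = 0) -> u = 0) ->
    (forall (a : F) u u', rho (a *: u + u') = a *: rho u + rho u') ->
    (forall u v, g (rho u) v + g u (rho v) = 0) ->
    (forall k, rho k = 0 -> g k v = 0) ->
  exists w, rho w = v.
Proof.
move=> g_nondeg rho_comb rho_skew v_orth.
have /submxP [w ->] : (v <= lin1_mx rho)%MS.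
  apply: skew_mx_sub (form_mx_unit g_nondeg) (form_mx_skew rho_comb rho_skew) _.
  apply: trmx_inj; rewrite !trmx_mul !trmxK trmx0 mulmxA.
  apply/row_matrixP => i; rewrite row0 2!row_mul; apply/matrixP => a b.
  rewrite !ord1 [RHS]mxE -form_mxE v_orth // -(mul_rV_lin1_comb rho_comb).
  by rewrite -row_mul mulmx_ker row0.
by exists w; rewrite mul_rV_lin1_comb.
Qed.

End BilinearForm.

Lemma mexp_nilpotent (R : realType) n k (A : 'M[R]_n) : A ^+ k = 0 ->
  mexp A = \sum_(i < k) ((i`!)%:R)^-1 *: A ^+ i.
Proof.
move=> Ak; rewrite /mexp; apply: cvg_lim; first exact: norm_hausdorff.
apply: cvg_near_cst; exists k => // N /= kN.
rewrite -(subnKC kN) big_split_ord /= [X in _ + X]big1 ?addr0 // => i _.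
by rewrite exprD Ak mul0r scaler0.
Qed.

Section BilinearMap.
Variables (R : realType) (m n p : nat) (b : 'rV[R]_m -> 'rV[R]_n -> 'rV[R]_p).
Hypothesis b_bilin : bilinear_map b.

Let b_combl v a u u' : b (a *: u + u') v = a *: b u v + b u' v.
Proof. exact: b_bilin.1. Qed.

Let b_combr u a v v' : b u (a *: v + v') = a *: b u v + b u v'.
Proof. exact: b_bilin.2. Qed.

Lemma bilinear_map0l v : b 0 v = 0. Proof. exact: comb_linear0 (b_combl v). Qed.
Lemma bilinear_map0r u : b u 0 = 0. Proof. exact: comb_linear0 (b_combr u). Qed.
Lemma bilinear_mapZl a u v : b (a *: u) v = a *: b u v.
Proof. exact: (comb_linearZ (b_combl v) a u). Qed.
Lemma bilinear_mapZr a u v : b u (a *: v) = a *: b u v.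
Proof. exact: (comb_linearZ (b_combr u) a v). Qed.
Lemma bilinear_mapNr u v : b u (- v) = - b u v.
Proof. exact: (comb_linearN (b_combr u) v). Qed.

End BilinearMap.

Section Construction.
Variables (R : realType) (nz nV nl : nat).
Local Notation g := 'rV[R]_(nz + nV + nl).

Lemma gz_mk z v x : gz (@gmk R nz nV nl z v x) = z.
Proof. by rewrite /gz /gmk !row_mxKl. Qed.

Lemma gV_mk z v x : gV (@gmk R nz nV nl z v x) = v.
Proof. by rewrite /gV /gmk row_mxKl row_mxKr. Qed.

Lemma gl_mk z v x : gl (@gmk R nz nV nl z v x) = x.
Proof. by rewrite /gl /gmk row_mxKr. Qed.

Lemma gmk_comb a z v x z' v' x' :
  a *: @gmk R nz nV nl z v x + gmk z' v' x' =
  gmk (a *: z + z') (a *: v + v') (a *: x + x').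
Proof. by rewrite /gmk !scale_row_mx !add_row_mx. Qed.

Lemma gV_comb a (u u' : g) : gV (a *: u + u') = a *: gV u + gV u'.
Proof. by rewrite /gV !linearP. Qed.

Lemma gl_comb a (u u' : g) : gl (a *: u + u') = a *: gl u + gl u'.
Proof. by rewrite /gl !linearP. Qed.

Variables (brl : 'rV[R]_nl -> 'rV[R]_nl -> 'rV[R]_nl)
  (act : 'rV[R]_nl -> 'rV[R]_nV -> 'rV[R]_nV)
  (beta : 'rV[R]_nV -> 'rV[R]_nV -> 'rV[R]_nz).
Hypotheses (brl_bilin : bilinear_map brl) (act_bilin : bilinear_map act)
  (beta_bilin : bilinear_map beta).
Local Notation br := (gbracket brl act beta).

Lemma gbracket_combr w a (u u' : g) : br w (a *: u + u') = a *: br w u + br w u'.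
Proof.
case: brl_bilin act_bilin beta_bilin => _ brl_r [act_l act_r] [_ beta_r].
rewrite /gbracket gmk_comb gV_comb gl_comb brl_r beta_r act_r act_l.
by congr gmk; rewrite scalerBr opprD addrACA.
Qed.

Lemma ad_mx_gbracketE w (u : g) : u *m ad_mx br w = br w u.
Proof. exact/mul_rV_lin1_comb/gbracket_combr. Qed.

Lemma gbracket_V_l w (u : g) :
  br (gmk 0 w 0) u = gmk (beta w (gV u)) (- act (gl u) w) 0.
Proof.
rewrite /gbracket gV_mk gl_mk (bilinear_map0l act_bilin).
by rewrite (bilinear_map0l brl_bilin) sub0r.
Qed.

Lemma mexp_ad_V w (u : g) :
  u *m mexp (ad_mx br (gmk 0 w 0)) =
  u + gmk (beta w (gV u) - 2^-1 *: beta w (act (gl u) w)) (- act (gl u) w) 0.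
Proof.
have act0 := bilinear_map0l act_bilin w.
have ad2 y : br (gmk 0 w 0) (br (gmk 0 w 0) y) = gmk (- beta w (act (gl y) w)) 0 0.
  by rewrite !gbracket_V_l gV_mk gl_mk act0 oppr0 (bilinear_mapNr beta_bilin).
have ad3 : ad_mx br (gmk 0 w 0) ^+ 3 = 0.
  apply/row_matrixP => i; rewrite row0 rowE !exprS expr0 mulr1 -!mulmxE !mulmxA.
  rewrite !ad_mx_gbracketE ad2 !gl_mk (bilinear_map0l brl_bilin) act0.
  by rewrite (bilinear_map0r beta_bilin) oppr0 /gmk !row_mx0.
rewrite (mexp_nilpotent ad3) !big_ord_recr big_ord0 /= add0r expr0 expr1 invr1 !scale1r.
rewrite !mulmxDr mulmx1 -scalemxAr expr2 mulmxA !ad_mx_gbracketE ad2 gbracket_V_l.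
rewrite -addrA [_ + _ *: _]addrC gmk_comb !scaler0 !addr0 add0r scalerN.
by rewrite (addrC (- _)).
Qed.

Lemma gV_mexp_ad_V w (u : g) :
  gV (u *m mexp (ad_mx br (gmk 0 w 0))) = gV u - act (gl u) w.
Proof. by rewrite mexp_ad_V -{1}[u]scale1r gV_comb scale1r gV_mk. Qed.

Lemma mexp_ad_V_ker w t (u : g) : act (gl u) w = 0 ->
  u *m mexp (ad_mx br (gmk 0 (t *: w) 0)) = u + t *: gmk (beta w (gV u)) 0 0.
Proof.
move=> uw0; rewrite mexp_ad_V (bilinear_mapZr act_bilin) uw0 scaler0.
rewrite (bilinear_map0r beta_bilin) oppr0 scaler0 subr0 (bilinear_mapZl beta_bilin).
by rewrite /gmk !scale_row_mx !scaler0.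
Qed.

End Construction.

Section Orbits.
Variables (R : realType) (n : nat) (br : 'rV[R]_n -> 'rV[R]_n -> 'rV[R]_n).

Lemma inn_orbit_mexp x y : inn_orbit br x (x *m mexp (ad_mx br y)).
Proof.
by exists (mexp (ad_mx br y)) => //; exists [:: (true, y)]; rewrite /= mulmx1.
Qed.

Lemma inn_orbit_sub_co x : inn_orbit br x `<=` co br x.
Proof.
move=> u orb_u; apply: subset_closure.
exists 1%N, (fun=> 1), (fun=> u); split => //; first by rewrite big_ord1.
by rewrite big_ord1 scale1r.
Qed.

Lemma orbit_line_not_pointed x d : d != 0 ->
  (forall t, inn_orbit br x (x + t *: d)) -> ~ pointed (co br x).
Proof.
by move=> d_neq0 line; apply; exists x, d; split => // t; exact/inn_orbit_sub_co.
Qed.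

End Orbits.

Theorem theorem3p4 (R : realType) (nz nV nl : nat)
  (brl : 'rV[R]_nl -> 'rV[R]_nl -> 'rV[R]_nl)
  (act : 'rV[R]_nl -> 'rV[R]_nV -> 'rV[R]_nV)
  (beta : 'rV[R]_nV -> 'rV[R]_nV -> 'rV[R]_nz)
  (Hl : reductive brl)
  (HV : is_module brl act)
  (Hbeta : invariant_skew act beta)
  (Hadm : admissible (gbracket brl act beta))
  (Hcenter : forall u : 'rV[R]_(nz + nV + nl),
      (forall u', gbracket brl act beta u u' = 0) <-> (gV u = 0 /\ gl u = 0))
  (Hf : exists f : 'rV[R]_nz -> R,
      [/\ forall (a : R) z z', f (a *: z + z') = a * f z + f z',
          forall v, (forall w, f (beta v w) = 0) -> v = 0 &
          exists y, forall v, v != 0 -> 0 < f (beta (act y v) v)])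
  (x : 'rV[R]_(nz + nV + nl))
  (Hx : pointed (co (gbracket brl act beta) x)) :
  exists u, inn_orbit (gbracket brl act beta) x u /\ gV u = 0.
Proof.
case: Hl => -[brl_bilin _ _] _; case: HV => act_bilin _.
case: Hbeta => beta_bilin _ beta_inv; case: Hf => f [f_comb f_nondeg _].
pose omega u v := f (beta u v).
have f0 : f 0 = 0 := @comb_linear0 _ _ R^o f f_comb.
have [v_orth | /existsNP[k /not_implyP[Xk0 /eqP kv_neq0]]] :=
  pselect (forall k, act (gl x) k = 0 -> omega k (gV x) = 0).
  have [w Xw] : exists w, act (gl x) w = gV x.
    apply: (skew_image_orth_ker (g := omega)) v_orth.
    - by move=> a u u' v; rewrite /omega beta_bilin.1 f_comb.
    - by move=> a u v v'; rewrite /omega beta_bilin.2 f_comb.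
    - exact: f_nondeg.
    - by move=> a u u'; apply: act_bilin.2.
    - by move=> u v; rewrite /omega -(@comb_linearD _ _ R^o f f_comb) beta_inv.
  exists (x *m mexp (ad_mx (gbracket brl act beta) (gmk 0 w 0))).
  by split; [exact: inn_orbit_mexp | rewrite gV_mexp_ad_V // Xw subrr].
exfalso; apply: (orbit_line_not_pointed (d := gmk (beta k (gV x)) 0 0)) Hx.
  apply: contra_neq kv_neq0 => /(congr1 (@gz R nz nV nl)).
  by rewrite gz_mk /gz !linear0 /omega => ->.
move=> t; rewrite -(mexp_ad_V_ker brl_bilin act_bilin beta_bilin t Xk0).
exact: inn_orbit_mexp.
Qed.
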